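(* Let $\mathcal T$ be a pre-triangulated category. (1) $\mathcal T$ and $\mathcal T^{op}$ are fp-equivalent. (2) If $S$ is a Serre functor of $\mathcal T$, then $(\mathcal T,S)$ and $(\mathcal T^{op},S^{op})$ are fp-$S$-equivalent.
   Context: $\Bbbk$ is an algebraically closed field; categories are $\Bbbk$-linear. $\mathcal T^{op}$ is pre-triangulated with suspension induced by $\Sigma^{-1}$, and $S^{op}$ denotes the Serre functor of $\mathcal T^{op}$ induced by $S^{-1}$. In a pre-triangulated category with suspension $\Sigma$, an atomic object is $M$ with $\mathrm{Hom}(M,M)=\Bbbk$ and $\mathrm{Hom}(M,\Sigma^{-i}M)=0$ for all $i>0$; an atomic set of size $n$ is a set $\{X_1,\dots,X_n\}$ of nonzero atomic objects with $\dim_\Bbbk\mathrm{Hom}(X_i,X_j)=\delta_{ij}$. For an endofunctor $\sigma$, $\mathrm{fpdim}^n(\sigma)=\sup\rho\big((\dim_\Bbbk\mathrm{Hom}(X_i,\sigma X_j))_{i,j}\big)$ over atomic sets of size $n$ ($0$ if none), where $\rho$ is spectral radius (for entries $\pm\infty$, replace by $\pm x_{ij}$ and take $\liminf$ as all $x_{ij}\to\infty$). Two pre-triangulated categories $(\mathcal T_i,\Sigma_i)$ are fp-equivalent if $\mathrm{fpdim}^n(\Sigma_1^m)=\mathrm{fpdim}^n(\Sigma_2^m)$ for all $n\ge1$, $m\in\mathbb Z$. Two pre-triangulated categories with Serre functors $(\mathcal T_i,\Sigma_i,S_i)$ are fp-$S$-equivalent if $\mathrm{fpdim}^n(\Sigma_1^m\circ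 S_1^k)=\mathrm{fpdim}^n(\Sigma_2^m\circ S_2^k)$ for all $n\ge1$, $m,k\in\mathbb Z$. A Serre functor $S$ satisfies $\mathrm{Hom}(X,Y)^*\cong\mathrm{Hom}(Y,SX)$ naturally. *)

From HB Require Import structures.
From mathcomp Require Import all_boot all_order all_algebra.
From mathcomp Require Import boolp classical_sets reals constructive_ereal ereal.
From mathcomp Require Import complex.
Set Implicit Arguments. Unset Strict Implicit. Unset Printing Implicit Defensive.
Import Order.TTheory GRing.Theory Num.Theory.
Local Open Scope ring_scope.
Local Open Scope classical_set_scope.

Section LinCat.
Variable K : fieldType.

Record linCat := LinCat {
  Obj : Type;
  Hom : Obj -> Obj -> lmodType K;
  comp : forall X Y Z, Hom Y Z -> Hom X Y -> Hom X Z;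
  idm : forall X, Hom X X;
  compA : forall X Y Z W (f : Hom Z W) (g : Hom Y Z) (h : Hom X Y),
    comp f (comp g h) = comp (comp f g) h;
  comp1m : forall X Y (f : Hom X Y), comp (idm Y) f = f;
  compm1 : forall X Y (f : Hom X Y), comp f (idm X) = f;
  compDl : forall X Y Z (a : K) (f g : Hom Y Z) (h : Hom X Y),
    comp (a *: f + g) h = a *: comp f h + comp g h;
  compDr : forall X Y Z (a : K) (f : Hom Y Z) (g h : Hom X Y),
    comp f (a *: g + h) = a *: comp f g + comp f h
}.

End LinCat.

Arguments Hom {K} C : rename.
Arguments comp {K C X Y Z} : rename.
Arguments idm {K C} X : rename.

Section Op.
Variables (K : fieldType) (C : linCat K).

Definition op_Hom (X Y : Obj C) : lmodType K := Hom C Y X.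
Definition op_comp (X Y Z : Obj C) (f : op_Hom Y Z) (g : op_Hom X Y) : op_Hom X Z :=
  @comp K C Z Y X g f.

Lemma op_compA X Y Z W (f : op_Hom Z W) (g : op_Hom Y Z) (h : op_Hom X Y) :
  op_comp f (op_comp g h) = op_comp (op_comp f g) h.
Proof. by rewrite /op_comp compA. Qed.
Lemma op_comp1m X Y (f : op_Hom X Y) : op_comp (idm Y) f = f.
Proof. exact: compm1. Qed.
Lemma op_compm1 X Y (f : op_Hom X Y) : op_comp f (idm X) = f.
Proof. exact: comp1m. Qed.
Lemma op_compDl X Y Z (a : K) (f g : op_Hom Y Z) (h : op_Hom X Y) :
  op_comp (a *: f + g) h = a *: op_comp f h + op_comp g h.
Proof. exact: compDr. Qed.
Lemma op_compDr X Y Z (a : K) (f : op_Hom Y Z) (g h : op_Hom X Y) :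
  op_comp f (a *: g + h) = a *: op_comp f g + op_comp f h.
Proof. exact: compDl. Qed.

Definition opCat : linCat K :=
  @LinCat K (Obj C) op_Hom op_comp (@idm K C)
    op_compA op_comp1m op_compm1 op_compDl op_compDr.

End Op.

Section Basic.
Variables (K : fieldType) (C : linCat K).
Local Notation Hom := (Hom C).

Definition is_iso (X Y : Obj C) (f : Hom X Y) : Prop :=
  exists g : Hom Y X, comp g f = idm X /\ comp f g = idm Y.

Definition zero_obj (Z : Obj C) : Prop := idm Z = 0.

Definition biproduct (X Y P : Obj C) (i1 : Hom X P) (i2 : Hom Y P)
  (p1 : Hom P X) (p2 : Hom P Y) : Prop :=
  [/\ comp p1 i1 = idm X, comp p2 i2 = idm Y, comp p1 i2 = 0,
      comp p2 i1 = 0 & comp i1 p1 + comp i2 p2 = idm P].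

Definition additive_cat : Prop :=
  (exists Z, zero_obj Z) /\
  forall X Y : Obj C, exists P (i1 : Hom X P) (i2 : Hom Y P) (p1 : Hom P X)
    (p2 : Hom P Y), biproduct i1 i2 p1 p2.

Record functor := Functor {
  fobj : Obj C -> Obj C;
  fmap : forall X Y, Hom X Y -> Hom (fobj X) (fobj Y);
  fmapD : forall X Y (a : K) (f g : Hom X Y),
    fmap (a *: f + g) = a *: fmap f + fmap g;
  fmap1 : forall X, fmap (idm X) = idm (fobj X);
  fmapM : forall X Y Z (f : Hom Y Z) (g : Hom X Y),
    fmap (comp f g) = comp (fmap f) (fmap g)
}.

Definition quasi_inverse (F G : functor) : Prop :=
  (exists alpha : forall X, Hom (fobj F (fobj G X)) X,
     (forall X, is_iso (alpha X)) /\
     forall X Y (f : Hom X Y),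
       comp (alpha Y) (fmap F (fmap G f)) = comp f (alpha X)) /\
  (exists beta : forall X, Hom (fobj G (fobj F X)) X,
     (forall X, is_iso (beta X)) /\
     forall X Y (f : Hom X Y),
       comp (beta Y) (fmap G (fmap F f)) = comp f (beta X)).

End Basic.

Arguments functor {K} C.
Arguments fobj {K C} f X : rename.
Arguments fmap {K C} f {X Y} : rename.

Section PreTri.
Variables (K : fieldType) (C : linCat K) (Sig : functor C).
Local Notation Hom := (Hom C).

Record triangle := Tri {
  tX : Obj C; tY : Obj C; tZ : Obj C;
  tf : Hom tX tY; tg : Hom tY tZ; th : Hom tZ (fobj Sig tX) }.

Definition tri_morph (T1 T2 : triangle) (u : Hom (tX T1) (tX T2))
  (v : Hom (tY T1) (tY T2)) (w : Hom (tZ T1) (tZ T2)) : Prop :=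
  [/\ comp (tf T2) u = comp v (tf T1),
      comp (tg T2) v = comp w (tg T1) &
      comp (th T2) w = comp (fmap Sig u) (th T1)].

Definition tri_iso (T1 T2 : triangle) : Prop :=
  exists (u : Hom (tX T1) (tX T2)) (v : Hom (tY T1) (tY T2))
    (w : Hom (tZ T1) (tZ T2)), [/\ tri_morph u v w, is_iso u, is_iso v & is_iso w].

Definition pretriangulation (D : triangle -> Prop) : Prop :=
  [/\
      (forall T1 T2, tri_iso T1 T2 -> D T1 -> D T2),
      (forall X, exists Z (g : Hom X Z) (h : Hom Z (fobj Sig X)),
          zero_obj Z /\ D (@Tri X X Z (idm X) g h)),
      (forall X Y (f : Hom X Y), exists Z (g : Hom Y Z) (h : Hom Z (fobj Sig X)),
          D (Tri f g h)),
      (forall X Y Z (f : Hom X Y) (g : Hom Y Z) (h : Hom Z (fobj Sig X)),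
          D (Tri f g h) <-> D (Tri g h (- fmap Sig f))) &
      (forall T1 T2, D T1 -> D T2 ->
         forall (u : Hom (tX T1) (tX T2)) (v : Hom (tY T1) (tY T2)),
           comp (tf T2) u = comp v (tf T1) ->
           exists w : Hom (tZ T1) (tZ T2), tri_morph u v w)].

End PreTri.

Definition pretriangulated (K : fieldType) (C : linCat K) (Sig Sig' : functor C) : Prop :=
  [/\ additive_cat C, quasi_inverse Sig Sig' & exists D, pretriangulation (Sig:=Sig) D].

(* S is an equivalence (with quasi-inverse S') together with isomorphisms
   Hom(Y, S X) ~= Hom(X, Y)^* (as linear maps onto the linear dual), natural
   in X and Y. *)
Definition serre_functor (K : fieldType) (C : linCat K) (S S' : functor C) : Prop :=
  quasi_inverse S S' /\
  exists eta : forall X Y : Obj C, Hom C Y (fobj S X) -> Hom C X Y -> K,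
    [/\
        (forall X Y (a : K) g1 g2 h,
           eta X Y (a *: g1 + g2) h = a * eta X Y g1 h + eta X Y g2 h),
        (forall X Y (a : K) g h1 h2,
           eta X Y g (a *: h1 + h2) = a * eta X Y g h1 + eta X Y g h2),
        (forall X Y g1 g2, (forall h, eta X Y g1 h = eta X Y g2 h) -> g1 = g2),
        (forall X Y (phi : Hom C X Y -> K),
           (forall (a : K) h1 h2, phi (a *: h1 + h2) = a * phi h1 + phi h2) ->
           exists g, forall h, eta X Y g h = phi h) &
        (forall X X' Y (a : Hom C X X') (g : Hom C Y (fobj S X)) (h : Hom C X' Y),
           eta X' Y (comp (fmap S a) g) h = eta X Y g (comp h a)) /\
        (forall X Y Y' (b : Hom C Y' Y) (g : Hom C Y (fobj S X)) (h : Hom C X Y'),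
           eta X Y' (comp g b) h = eta X Y g (comp b h))].

Section FP.
Variables (R : realType) (K : fieldType).

Definition lin_indep (V : lmodType K) (k : nat) (s : 'I_k -> V) : Prop :=
  forall c : 'I_k -> K, \sum_(i < k) c i *: s i = 0 -> forall i, c i = 0.

Definition dimv (V : lmodType K) : \bar R :=
  ereal_sup [set (k%:R)%:E | k in [set k : nat | exists s : 'I_k -> V, lin_indep s]].

Definition spectral_radius (n : nat) (A : 'M[R]_n) : R :=
  sup [set complex.ComplexField.Normc.normc l | l in
       [set l : complex.complex R |
         eigenvalue (map_mx (fun r : R => complex.Complex r 0) A) l]].

Definition fin_inst (n : nat) (D : 'M[\bar R]_n) (x : 'I_n -> 'I_n -> R) : 'M[R]_n :=
  \matrix_(i, j) match D i j with
                 | EFin r => r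
                 | +oo%E => x i j
                 | -oo%E => - x i j
                 end.

(* rho(D), with the liminf as all x_ij -> +oo *)
Definition fp_rho (n : nat) (D : 'M[\bar R]_n) : \bar R :=
  ereal_sup [set ereal_inf [set (spectral_radius (fin_inst D x))%:E |
                              x in [set x : 'I_n -> 'I_n -> R | forall i j, M <= x i j]]
            | M in [set: R]].

Variables (C : linCat K) (Sinv : Obj C -> Obj C).
(* Sinv is the object map of Sigma^{-1} *)

Definition atomic (M : Obj C) : Prop :=
  dimv (Hom C M M) = 1%E /\
  forall i : nat, (0 < i)%N -> dimv (Hom C M (iter i Sinv M)) = 0%E.

Definition atomic_set (n : nat) (X : 'I_n -> Obj C) : Prop :=
  [/\ forall i, idm (X i) != 0,
      forall i, atomic (X i) &
      forall i j, dimv (Hom C (X i) (X j)) = ((i == j)%:R)%:E].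

Definition fpdim (n : nat) (sigma : Obj C -> Obj C) : \bar R :=
  if pselect (exists X : 'I_n -> Obj C, atomic_set X) then
    ereal_sup [set fp_rho (\matrix_(i, j) dimv (Hom C (X i) (sigma (X j))))
              | X in [set X : 'I_n -> Obj C | atomic_set X]]
  else 0%E.

End FP.

Definition zpow (T : Type) (f g : T -> T) (m : int) : T -> T :=
  match m with
  | Posz k => iter k f
  | Negz k => iter k.+1 g
  end.

Definition fp_equivalent (R : realType) (K : fieldType)
  (C1 : linCat K) (Sig1 Sig1' : Obj C1 -> Obj C1)
  (C2 : linCat K) (Sig2 Sig2' : Obj C2 -> Obj C2) : Prop :=
  forall (n : nat) (m : int), (1 <= n)%N ->
    fpdim R Sig1' n (zpow Sig1 Sig1' m) = fpdim R Sig2' n (zpow Sig2 Sig2' m).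

Definition fpS_equivalent (R : realType) (K : fieldType)
  (C1 : linCat K) (Sig1 Sig1' S1 S1' : Obj C1 -> Obj C1)
  (C2 : linCat K) (Sig2 Sig2' S2 S2' : Obj C2 -> Obj C2) : Prop :=
  forall (n : nat) (m k : int), (1 <= n)%N ->
    fpdim R Sig1' n (fun X => zpow Sig1 Sig1' m (zpow S1 S1' k X)) =
    fpdim R Sig2' n (fun X => zpow Sig2 Sig2' m (zpow S2 S2' k X)).

(* Hom-spaces of T^op are those of T with the arguments swapped, and the
   suspension of T^op is Sig^-1.  Since Sig^-1 is quasi-inverse to Sig,
   dim Hom(Sig^-m A, B) = dim Hom(A, Sig^m B); hence atomic sets of T and of T^op
   coincide, and on such a set the dimension matrix of Sig_op^m is the transpose of
   that of Sig^m, which has the same spectral radius.  For (2) the same argument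
   applies to Sig^m S^k once S is known to commute with Sig up to isomorphism:
   S (Sig X) and Sig (S X) both represent the functor Hom(Sig X, -)^*, the latter
   through the Serre duality of X transported along Sig. *)

From Pilot Require Import Defs.
From mathcomp Require Import all_boot all_order all_algebra.
From mathcomp Require Import boolp classical_sets reals constructive_ereal ereal.
(* Let [comp], [compA], [dimv] refer to Defs rather than to ssrfun and vector. *)
Import Defs.
Set Implicit Arguments. Unset Strict Implicit. Unset Printing Implicit Defensive.
Import Order.TTheory GRing.Theory Num.Theory.
Local Open Scope ring_scope.
Local Open Scope classical_set_scope.

Section LinearDimension.
Variables (R : realType) (K : fieldType).

Lemma dimv_le_inj (V W : lmodType K) (f : V -> W) :
  linear f -> injective f -> (dimv R V <= dimv R W)%E.
Proof.
move=> f_lin f_inj; apply: ereal_sup_le => _ [k [s s_indep] <-].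
exists k => //; exists (f \o s) => c sum0 i.
have f0 : f 0 = 0.
  by have := f_lin (-1) 0 0; rewrite scaler0 addr0 scaleN1r addNr.
have fD x y : f (x + y) = f x + f y by have := f_lin 1 x y; rewrite !scale1r.
have fZ a x : f (a *: x) = a *: f x by have := f_lin a x 0; rewrite !addr0 f0 addr0.
apply: s_indep; apply: f_inj; rewrite f0 -sum0 (big_morph f fD f0).
by apply: eq_bigr => j _; rewrite fZ.
Qed.

Lemma dimv_eq_inj (V W : lmodType K) (f : V -> W) (g : W -> V) :
  linear f -> injective f -> linear g -> injective g -> dimv R V = dimv R W.
Proof.
by move=> fl fi gl gi; apply/le_anti; rewrite (dimv_le_inj fl fi) (dimv_le_inj gl gi).
Qed.

End LinearDimension.

Section SpectralRadius.
Variable R : realType.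

Lemma char_poly_trmx (F : comNzRingType) n (A : 'M[F]_n) :
  char_poly A^T = char_poly A.
Proof.
rewrite /char_poly /char_poly_mx -[RHS]det_tr; congr (\det _).
by rewrite [in RHS]linearB /= tr_scalar_mx map_trmx.
Qed.

Lemma eigenvalue_trmx (F : fieldType) n (A : 'M[F]_n) : eigenvalue A^T =1 eigenvalue A.
Proof. by move=> a; rewrite !eigenvalue_root_char char_poly_trmx. Qed.

Lemma spectral_radius_trmx n (A : 'M[R]_n) :
  spectral_radius A^T = spectral_radius A.
Proof.
by rewrite /spectral_radius -map_trmx (funext (eigenvalue_trmx _)).
Qed.

Lemma fin_inst_trmx n (D : 'M[\bar R]_n) x :
  fin_inst D^T x = (fin_inst D (fun i j => x j i))^T.
Proof. by apply/matrixP => i j; rewrite !mxE. Qed.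

Lemma fp_rho_trmx n (D : 'M[\bar R]_n) : fp_rho D^T = fp_rho D.
Proof.
have inst_trmx M :
    [set (spectral_radius (fin_inst D^T x))%:E | x in [set x | forall i j, M <= x i j]] =
    [set (spectral_radius (fin_inst D x))%:E | x in [set x | forall i j, M <= x i j]].
  by apply/seteqP; split=> _ [x x_ge <-]; exists (fun i j => x j i);
    rewrite ?fin_inst_trmx ?spectral_radius_trmx // => i j; apply: x_ge.
exact: (congr1 (fun S : R -> set (\bar R) => ereal_sup [set ereal_inf (S M) | M in [set: R]])
                (funext inst_trmx)).
Qed.

End SpectralRadius.

Section Isomorphisms.
Variables (K : fieldType) (C : linCat K).
Local Notation Hom := (Hom C).

Definition isomorphic (X Y : Obj C) : Prop := exists u : Hom X Y, is_iso u.

Lemma is_iso_epi X Y Z (u : Hom X Y) (f g : Hom Y Z) :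
  is_iso u -> comp f u = comp g u -> f = g.
Proof.
by move=> [v [_ uv]] fu_gu; rewrite -[f]compm1 -uv compA fu_gu -compA uv compm1.
Qed.

Lemma is_iso_mono X Y Z (u : Hom Y Z) (f g : Hom X Y) :
  is_iso u -> comp u f = comp u g -> f = g.
Proof.
by move=> [v [vu _]] uf_ug; rewrite -[f]comp1m -vu -compA uf_ug compA vu comp1m.
Qed.

Lemma is_iso_comp X Y Z (f : Hom Y Z) (g : Hom X Y) :
  is_iso f -> is_iso g -> is_iso (comp f g).
Proof.
move=> [f' [f'f ff']] [g' [g'g gg']]; exists (comp g' f'); split.
- by rewrite -compA (compA f' f) f'f comp1m g'g.
- by rewrite -compA (compA g g') gg' comp1m ff'.
Qed.

Lemma isomorphic_refl X : isomorphic X X.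
Proof. by exists (idm X); exists (idm X); rewrite comp1m. Qed.

Lemma isomorphic_sym X Y : isomorphic X Y -> isomorphic Y X.
Proof. by move=> [u [v [vu uv]]]; exists v; exists u. Qed.

Lemma isomorphic_trans X Y Z : isomorphic X Y -> isomorphic Y Z -> isomorphic X Z.
Proof. by move=> [u iso_u] [v iso_v]; exists (comp v u); apply: is_iso_comp. Qed.

Lemma fmap_is_iso (F : functor C) X Y (u : Hom X Y) : is_iso u -> is_iso (fmap F u).
Proof. by move=> [v [vu uv]]; exists (fmap F v); rewrite -!fmapM vu uv !fmap1. Qed.

Lemma isomorphic_fobj (F : functor C) X Y :
  isomorphic X Y -> isomorphic (fobj F X) (fobj F Y).
Proof. by move=> [u iso_u]; exists (fmap F u); apply: fmap_is_iso. Qed.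

Lemma dimv_Hom_isomorphic (R : realType) A B B' :
  isomorphic B B' -> dimv R (Hom A B) = dimv R (Hom A B').
Proof.
move=> [u [v [vu uv]]].
apply: (@dimv_eq_inj R K _ _ (comp u) (comp v)) => [a f g|f g|a f g|f g].
- exact: compDr.
- by apply: is_iso_mono; exists v.
- exact: compDr.
- by apply: is_iso_mono; exists u.
Qed.

(* [A] represents the functor [Y |-> (Hom Z Y)^*], with universal element [t]. *)
Definition dualizing (Z A : Obj C) (t : Hom Z A -> K) : Prop :=
  scalar t /\
  forall Y,
    (forall g1 g2 : Hom Y A, (forall h, t (comp g1 h) = t (comp g2 h)) -> g1 = g2) /\
    (forall phi : Hom Z Y -> K, scalar phi ->
       exists g : Hom Y A, forall h, t (comp g h) = phi h).

Lemma dualizing_isomorphic Z A B (tA : Hom Z A -> K) (tB : Hom Z B -> K) :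
  dualizing tA -> dualizing tB -> isomorphic A B.
Proof.
move=> [tA_lin dA] [tB_lin dB].
have [injA _] := dA A; have [_ surjA] := dA B.
have [injB _] := dB B; have [_ surjB] := dB A.
have [u tBu] := surjB tA tA_lin; have [v tAv] := surjA tB tB_lin.
exists u; exists v; split.
- by apply: injA => h; rewrite -compA tAv tBu comp1m.
- by apply: injB => h; rewrite -compA tBu tAv comp1m.
Qed.

End Isomorphisms.

Section QuasiInverse.
Variables (K : fieldType) (C : linCat K).
Local Notation Hom := (Hom C).

Lemma quasi_inverse_sym (F G : functor C) : quasi_inverse F G -> quasi_inverse G F.
Proof. by move=> [FG GF]; split. Qed.

Lemma fmap_inj (F G : functor C) : quasi_inverse F G ->
  forall X Y, injective (@fmap _ _ F X Y).
Proof.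
move=> [_ [beta [beta_iso beta_nat]]] X Y f g Ff_Fg.
by apply: (is_iso_epi (beta_iso X)); rewrite -!beta_nat Ff_Fg.
Qed.

Variables (F G : functor C).
Hypothesis FG : quasi_inverse F G.

Lemma fmap_surj A B (u : Hom (fobj F A) (fobj F B)) : exists k, fmap F k = u.
Proof.
case: (FG) => _ [beta [beta_iso beta_nat]].
have [beta' [beta'beta _]] := beta_iso A.
exists (comp (beta B) (comp (fmap G u) beta')).
apply: (fmap_inj (quasi_inverse_sym FG)); apply: (is_iso_mono (beta_iso B)).
by rewrite beta_nat -!compA beta'beta compm1.
Qed.

Definition unfmap A B (u : Hom (fobj F A) (fobj F B)) : Hom A B :=
  projT1 (cid (fmap_surj u)).

Lemma unfmapK A B (u : Hom (fobj F A) (fobj F B)) : fmap F (unfmap u) = u.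
Proof. exact: projT2 (cid (fmap_surj u)). Qed.

Lemma fmapK A B (k : Hom A B) : unfmap (fmap F k) = k.
Proof. by apply: (fmap_inj FG); rewrite unfmapK. Qed.

Lemma unfmapMr A B D (u : Hom (fobj F B) (fobj F D)) (k : Hom A B) :
  unfmap (comp u (fmap F k)) = comp (unfmap u) k.
Proof. by apply: (fmap_inj FG); rewrite unfmapK fmapM unfmapK. Qed.

Lemma unfmap_linear A B : linear (@unfmap A B).
Proof. by move=> a u v; apply: (fmap_inj FG); rewrite fmapD !unfmapK. Qed.

Lemma dimv_Hom_adj (R : realType) A B :
  dimv R (Hom (fobj F A) B) = dimv R (Hom A (fobj G B)).
Proof.
case: (FG) => [[alpha [alpha_iso _]] [beta [beta_iso _]]].
have [beta' [beta'beta betabeta']] := beta_iso A.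
have beta'_iso : is_iso beta' by exists (beta A).
apply: (@dimv_eq_inj R K _ _ (fun f => comp (fmap G f) beta')
                             (fun h => comp (alpha B) (fmap F h))).
- by move=> a f g; rewrite fmapD compDl.
- by move=> f g /(is_iso_epi beta'_iso) /(fmap_inj (quasi_inverse_sym FG)).
- by move=> a f g; rewrite fmapD compDr.
- by move=> f g /(is_iso_mono (alpha_iso B)) /(fmap_inj FG).
Qed.

End QuasiInverse.

Lemma dimv_Hom_adj_iter (R : realType) (K : fieldType) (C : linCat K) (F G : functor C) :
  quasi_inverse F G -> forall n A B,
  dimv R (Hom C (iter n (fobj F) A) B) = dimv R (Hom C A (iter n (fobj G) B)).
Proof.
move=> FG; elim=> [//|n IHn] A B.
by rewrite iterS (dimv_Hom_adj FG) IHn -iterSr.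
Qed.

Lemma dimv_Hom_adj_zpow (R : realType) (K : fieldType) (C : linCat K) (F G : functor C) :
  quasi_inverse F G -> forall m A B,
  dimv R (Hom C (zpow (fobj G) (fobj F) m A) B) =
  dimv R (Hom C A (zpow (fobj F) (fobj G) m B)).
Proof.
move=> FG [k|k] A B /=; first exact: dimv_Hom_adj_iter (quasi_inverse_sym FG) k A B.
exact: dimv_Hom_adj_iter FG k.+1 A B.
Qed.

Section SerreCommutesWithEquivalences.
Variables (K : fieldType) (C : linCat K) (F G S : functor C).
Local Notation Hom := (Hom C).
Hypothesis FG : quasi_inverse F G.
Variable eta : forall X Y : Obj C, Hom Y (fobj S X) -> Hom X Y -> K.
Hypothesis eta_linl : forall X Y (a : K) g1 g2 (h : Hom X Y),
  eta (a *: g1 + g2) h = a * eta g1 h + eta g2 h.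
Hypothesis eta_inj : forall X Y (g1 g2 : Hom Y (fobj S X)),
  (forall h, eta g1 h = eta g2 h) -> g1 = g2.
Hypothesis eta_surj : forall X Y (phi : Hom X Y -> K),
  scalar phi -> exists g, forall h, eta g h = phi h.
Hypothesis eta_natr : forall X Y Y' (b : Hom Y' Y) (g : Hom Y (fobj S X)) (h : Hom X Y'),
  eta (comp g b) h = eta g (comp b h).

Definition serre_trace X (g : Hom X (fobj S X)) : K := eta g (idm X).

Lemma eta_serre_trace X Y (g : Hom Y (fobj S X)) h : eta g h = serre_trace (comp g h).
Proof. by rewrite /serre_trace eta_natr compm1. Qed.

Lemma serre_trace_dualizing X : dualizing (@serre_trace X).
Proof.
split=> [a g1 g2|Y]; first exact: eta_linl.
split=> [g1 g2 tr_eq|phi phi_lin].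
- by apply: eta_inj => h; rewrite !eta_serre_trace.
- by have [g eta_g] := eta_surj phi_lin; exists g => h; rewrite -eta_serre_trace.
Qed.

(* Makes [F (S X)] represent [(Hom (F X) -)^*], as [S (F X)] does. *)
Definition transported_trace X (f : Hom (fobj F X) (fobj F (fobj S X))) : K :=
  serre_trace (unfmap FG f).

Lemma transported_trace_dualizing X : dualizing (@transported_trace X).
Proof.
split=> [a f1 f2|Y].
  by rewrite /transported_trace unfmap_linear; apply: eta_linl.
case: (FG) => [[alpha [alpha_iso _]] _].
have [alpha' [alpha'alpha alphaalpha']] := alpha_iso Y.
have trace_comp (g : Hom Y (fobj F (fobj S X))) k :
    transported_trace (comp g (comp (alpha Y) (fmap F k))) = eta (unfmap FG (comp g (alpha Y))) k.
  by rewrite /transported_trace compA unfmapMr eta_serre_trace.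
have factor (h : Hom (fobj F X) Y) : h = comp (alpha Y) (fmap F (unfmap FG (comp alpha' h))).
  by rewrite (unfmapK FG) compA alphaalpha' comp1m.
split=> [g1 g2 tr_eq|phi phi_lin].
- apply: (is_iso_epi (alpha_iso Y)); rewrite -[comp g1 _](unfmapK FG) -[comp g2 _](unfmapK FG).
  by congr (fmap F _); apply: eta_inj => k; rewrite -!trace_comp.
- have [p eta_p] : exists p, forall k, eta p k = phi (comp (alpha Y) (fmap F k)).
    by apply: eta_surj => a k1 k2; rewrite fmapD compDr phi_lin.
  exists (comp (fmap F p) alpha') => h; rewrite [in LHS](factor h) trace_comp.
  by rewrite -compA alpha'alpha compm1 (fmapK FG) eta_p -factor.
Qed.

Lemma serre_fobj_commute X : isomorphic (fobj S (fobj F X)) (fobj F (fobj S X)).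
Proof.
exact: dualizing_isomorphic (serre_trace_dualizing (fobj F X)) (transported_trace_dualizing X).
Qed.

End SerreCommutesWithEquivalences.

Section CommuteUpToIso.
Variables (K : fieldType) (C : linCat K).

Definition preserves_iso (f : Obj C -> Obj C) : Prop :=
  forall X Y, isomorphic X Y -> isomorphic (f X) (f Y).

Definition commute_iso (f h : Obj C -> Obj C) : Prop :=
  forall X, isomorphic (f (h X)) (h (f X)).

Lemma fobj_preserves_iso (F : functor C) : preserves_iso (fobj F).
Proof. by move=> X Y; apply: isomorphic_fobj. Qed.

Lemma commute_iso_sym f h : commute_iso f h -> commute_iso h f.
Proof. by move=> fh X; apply: isomorphic_sym. Qed.

Lemma commute_iso_iterl f h n : preserves_iso f -> commute_iso f h -> commute_iso (iter n f) h.
Proof.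
move=> f_iso fh; elim: n => [|n IHn] X /=; first exact: isomorphic_refl.
by apply: isomorphic_trans (fh _); apply: f_iso.
Qed.

Lemma commute_iso_iter f h a b : preserves_iso f -> preserves_iso h ->
  commute_iso f h -> commute_iso (iter a f) (iter b h).
Proof.
move=> f_iso h_iso fh; apply: commute_iso_iterl => //.
by apply/commute_iso_sym/commute_iso_iterl => //; apply: commute_iso_sym.
Qed.

Lemma commute_iso_zpow f f' h h' m k :
  preserves_iso f -> preserves_iso f' -> preserves_iso h -> preserves_iso h' ->
  commute_iso f h -> commute_iso f' h -> commute_iso f h' -> commute_iso f' h' ->
  commute_iso (zpow f f' m) (zpow h h' k).
Proof. by move=> *; case: m => a; case: k => b /=; apply: commute_iso_iter. Qed.

(* [G (h X) ~ G (h (F (G X))) ~ G (F (h (G X))) ~ h (G X)] *)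
Lemma commute_iso_quasi_inverse (F G : functor C) h : quasi_inverse F G ->
  preserves_iso h -> commute_iso (fobj F) h -> commute_iso (fobj G) h.
Proof.
move=> [[alpha [alpha_iso _]] [beta [beta_iso _]]] h_iso Fh X.
have GhFG : isomorphic (fobj G (h X)) (fobj G (h (fobj F (fobj G X)))).
  by apply/isomorphic_fobj/h_iso/isomorphic_sym; exists (alpha X).
apply: (isomorphic_trans GhFG); apply: isomorphic_trans (_ : isomorphic _ (h (fobj G X))).
  by apply/isomorphic_fobj/isomorphic_sym.
by exists (beta (h (fobj G X))).
Qed.

End CommuteUpToIso.

Lemma serre_commute_zpow (K : fieldType) (C : linCat K) (Sig Sig' S S' : functor C) :
  quasi_inverse Sig Sig' -> serre_functor S S' -> forall m k,
  commute_iso (zpow (fobj S) (fobj S') k) (zpow (fobj Sig) (fobj Sig') m).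
Proof.
move=> SigSig' [SS' [eta [eta_linl _ eta_inj eta_surj [_ eta_natr]]]] m k.
have SSig : commute_iso (fobj S) (fobj Sig).
  exact: (serre_fobj_commute SigSig' eta_linl eta_inj eta_surj eta_natr).
have S'Sig : commute_iso (fobj S') (fobj Sig).
  by apply: (commute_iso_quasi_inverse SS') => //; apply: fobj_preserves_iso.
have SSig' : commute_iso (fobj S) (fobj Sig').
  apply/commute_iso_sym/(commute_iso_quasi_inverse SigSig'); first exact: fobj_preserves_iso.
  exact: commute_iso_sym.
have S'Sig' : commute_iso (fobj S') (fobj Sig').
  by apply: (commute_iso_quasi_inverse SS') => //; apply: fobj_preserves_iso.
by apply: commute_iso_zpow => //; apply: fobj_preserves_iso.
Qed.

Section Opposite.
Variables (R : realType) (K : fieldType) (T : linCat K) (Sig Sig' : functor T).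
Hypothesis SigSig' : quasi_inverse Sig Sig'.

Lemma atomic_op M : atomic R (fobj Sig') M <-> atomic (C := opCat T) R (fobj Sig) M.
Proof.
by split=> -[idM vanish]; split=> // i i_gt0; have := vanish i i_gt0;
  rewrite /= (dimv_Hom_adj_iter R SigSig').
Qed.

Lemma atomic_set_op n (X : 'I_n -> Obj T) :
  atomic_set R (fobj Sig') X <-> atomic_set (C := opCat T) R (fobj Sig) X.
Proof.
split=> -[nz atomicX orth]; split=> // [i|i j]; try exact/atomic_op;
  by have := orth j i; rewrite eq_sym.
Qed.

Lemma fpdim_op n (sig sig_op : Obj T -> Obj T) :
  (forall A B, dimv R (Hom T (sig_op A) B) = dimv R (Hom T A (sig B))) ->
  fpdim R (fobj Sig') n sig = fpdim (C := opCat T) R (fobj Sig) n sig_op.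
Proof.
move=> sig_adj.
have rho_op (Z : 'I_n -> Obj T) :
    fp_rho (\matrix_(i, j) dimv R (Hom (opCat T) (Z i) (sig_op (Z j)))) =
    fp_rho (\matrix_(i, j) dimv R (Hom T (Z i) (sig (Z j)))).
  by rewrite -fp_rho_trmx; congr fp_rho; apply/matrixP => i j; rewrite !mxE sig_adj.
rewrite /fpdim; case: pselect => [[X atX]|no_at] /=; case: pselect => [[Y atY]|no_at_op] /=.
- apply: congr1; apply/seteqP.
  by split=> _ [Z /atomic_set_op atZ <-]; exists Z; rewrite ?rho_op.
- by case: no_at_op; exists X; apply/atomic_set_op.
- by case: no_at; exists Y; apply/atomic_set_op.
- by [].
Qed.

End Opposite.

Theorem proposition3p9 (R : realType) (K : closedFieldType) (T : linCat K)
    (Sig Sig' : functor T) :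
  pretriangulated Sig Sig' ->
  fp_equivalent R (fobj Sig) (fobj Sig')
                  (C2 := opCat T) (fobj Sig') (fobj Sig) /\
  (forall S S' : functor T, serre_functor S S' ->
     fpS_equivalent R (fobj Sig) (fobj Sig') (fobj S) (fobj S')
                      (C2 := opCat T) (fobj Sig') (fobj Sig) (fobj S') (fobj S)).
Proof.
move=> [_ SigSig' _]; split=> [n m _|S S' serre n m k _].
  by apply: (fpdim_op SigSig') => A B; apply: dimv_Hom_adj_zpow.
have [SS' _] := serre.
apply: (fpdim_op SigSig') => A B.
rewrite (dimv_Hom_adj_zpow R SigSig') (dimv_Hom_adj_zpow R SS').
exact/dimv_Hom_isomorphic/serre_commute_zpow.
Qed.
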